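(* Consider a resource selection game with finite player set $N$ and finite resource set $R$ in which all resources have the same strictly increasing delay function $d$, and let $\mathcal{P}$ be a partition of $N$. Then every sequence of weak improving moves, each performed by a coalition that is a set of the partition $\mathcal{P}$, is finite, and it ends in a partition equilibrium.
   Context: Resource selection game: every player's strategy set is $R$; a state is $s=(s_i)_{i\in N}$ with $s_i\in R$; $\ell_r(s)$ is the number of players choosing $r$; player $i$'s cost is $c_i(s)=d(\ell_{s_i}(s))$ and utility $u_i(s)=-c_i(s)$, where $d:\{1,\dots,|N|\}\to\mathbb{N}$ is non-negative and strictly increasing. For $C\subseteq N$ write $s=(s_C,s_{-C})$. A weak improving move of coalition $C$ from state $s$ is a choice $s'_C$ with $u_i(s'_C,s_{-C})\ge u_i(s)$ for all $i\in C$ and $u_i(s'_C,s_{-C})>u_i(s)$ for at least one $i\in C$; the resulting state is $(s'_C,s_{-C})$. A partition equilibrium (with respect to $\mathcal{P}$) is a state in which no set $C\in\mathcal{P}$ has a weak improving move. *)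

From mathcomp Require Import all_boot all_order all_algebra.
Import Order.TTheory GRing.Theory Num.Theory.
Set Implicit Arguments. Unset Strict Implicit. Unset Printing Implicit Defensive.

Section RSG.
Variables (N R : finType).

Definition state := {ffun N -> R}.

Definition load (s : state) (r : R) : nat := #|[set j | s j == r]|.

Definition cost (d : nat -> nat) (s : state) (i : N) : nat := d (load s (s i)).

Definition utility (d : nat -> nat) (s : state) (i : N) : int :=
  (- (Posz (cost d s i)))%R.

Definition weak_improving_move (d : nat -> nat) (C : {set N}) (s s' : state) : Prop :=
  [/\ (forall j, j \notin C -> s' j = s j),
      (forall i, i \in C -> (utility d s i <= utility d s' i)%R)
    & (exists2 i, i \in C & (utility d s i < utility d s' i)%R)].

Definition partition_move (d : nat -> nat) (P : {set {set N}}) (s s' : state) : Prop :=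
  exists2 C, C \in P & weak_improving_move d C s s'.

Definition partition_equilibrium (d : nat -> nat) (P : {set {set N}}) (s : state) : Prop :=
  forall C, C \in P -> forall s' : state, ~ weak_improving_move d C s s'.

Definition strictly_increasing_on_players (d : nat -> nat) : Prop :=
  forall m n, 1 <= m -> m < n -> n <= #|N| -> d m < d n.

End RSG.

(* Weight an ordered pair of players sharing a resource by 2 if they belong to
   the same coalition of P and by 1 otherwise; the potential is the total weight.
   For a fixed coalition C it equals twice the total load seen by the members of C
   plus a term depending only on the players outside C.  Since d is strictly
   increasing, a weak improving move of C never raises the load of a member and
   strictly lowers one, so the potential strictly decreases along every sequence
   of such moves, which therefore cannot be infinite. *)

From mathcomp Require Import all_boot all_order all_algebra.
From mathcomp Require Import zify.
Import Order.TTheory GRing.Theory Num.Theory.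
Set Implicit Arguments. Unset Strict Implicit. Unset Printing Implicit Defensive.

Lemma no_infinite_descent (T : Type) (phi : T -> nat) (f : nat -> T) :
  ~ (forall n, phi (f n.+1) < phi (f n)).
Proof.
move=> dec; have bound n : phi (f n) + n <= phi (f 0).
  by elim: n => [|n IH]; [rewrite addn0 | have := dec n; lia].
by have := bound (phi (f 0)).+1; lia.
Qed.

Section Potential.
Variables (N R : finType) (P : {set {set N}}).
Hypothesis partP : partition P [set: N].

Definition same_resource (s : state N R) (i j : N) : nat := s i == s j.

Definition pair_weight (i j : N) : nat := 1 + (j \in pblock P i).

Definition potential (s : state N R) : nat :=
  \sum_i \sum_j same_resource s i j * pair_weight i j.

Lemma load_gt0 (s : state N R) i : 0 < load s (s i).
Proof. by rewrite /load card_gt0; apply/set0Pn; exists i; rewrite inE. Qed.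

Lemma load_le_card (s : state N R) r : load s r <= #|N|.
Proof. by rewrite /load max_card. Qed.

Lemma load_sum_same_resource (s : state N R) i :
  load s (s i) = \sum_j same_resource s i j.
Proof.
rewrite /load -sum1dep_card big_mkcond /=; apply: eq_bigr => j _.
by rewrite /same_resource eq_sym; case: (s j == s i).
Qed.

Lemma pair_weight_in (C : {set N}) i j :
  C \in P -> i \in C -> pair_weight i j = 1 + (j \in C).
Proof.
by case/and3P: partP => _ tI _ CP iC; rewrite /pair_weight (def_pblock tI CP iC).
Qed.

Lemma pair_weight_out (C : {set N}) i j :
  C \in P -> i \notin C -> j \in C -> pair_weight i j = 1.
Proof.
case/and3P: partP => /eqP covP tI _ CP iC jC.
have iP : i \in cover P by rewrite covP inE.
rewrite /pair_weight; case jPi: (j \in pblock P i) => //.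
have := iP; rewrite -mem_pblock -(def_pblock tI (pblock_mem iP) jPi).
by rewrite (def_pblock tI CP jC) (negbTE iC).
Qed.

Lemma potential_split (C : {set N}) (s : state N R) : C \in P ->
  potential s = 2 * (\sum_(i in C) load s (s i)) +
    \sum_(i | i \notin C) \sum_(j | j \notin C) same_resource s i j * pair_weight i j.
Proof.
move=> CP; rewrite /potential (bigID (mem C)) /=.
have inner_in i : i \in C -> \sum_j same_resource s i j * pair_weight i j =
    \sum_(j in C) 2 * same_resource s i j + \sum_(j | j \notin C) same_resource s i j.
  move=> iC; rewrite (bigID (mem C)) /=.
  congr (_ + _); apply: eq_bigr => j jC; rewrite (pair_weight_in _ CP iC).
    by rewrite jC mulnC.
  by rewrite (negbTE jC) muln1.
have inner_out i : i \notin C -> \sum_j same_resource s i j * pair_weight i j =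
    \sum_(j in C) same_resource s j i +
    \sum_(j | j \notin C) same_resource s i j * pair_weight i j.
  move=> iC; rewrite (bigID (mem C)) /=; congr (_ + _); apply: eq_bigr => j jC.
  by rewrite (pair_weight_out CP iC jC) muln1 /same_resource eq_sym.
rewrite (eq_bigr _ inner_in) (eq_bigr _ inner_out) [X in _ + X]big_split /=.
rewrite addnA; congr (_ + _).
rewrite (exchange_big_dep (mem C)) //= -big_split /= big_distrr /=.
apply: eq_bigr => i iC.
rewrite [X in _ + X](eq_bigl (fun j => j \notin C)) => [|j]; last by rewrite iC andbT.
rewrite load_sum_same_resource [X in _ = _ * X](bigID (mem C)) /=.
by rewrite mulnDr big_distrr /=; lia.
Qed.

Lemma potential_outside_eq (C : {set N}) (s s' : state N R) :
  (forall j, j \notin C -> s' j = s j) ->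
  \sum_(i | i \notin C) \sum_(j | j \notin C) same_resource s' i j * pair_weight i j =
  \sum_(i | i \notin C) \sum_(j | j \notin C) same_resource s i j * pair_weight i j.
Proof.
move=> sCs; apply: eq_bigr => i iC; apply: eq_bigr => j jC.
by rewrite /same_resource !sCs.
Qed.

Lemma weak_improving_move_load_le (d : nat -> nat) (C : {set N}) (s s' : state N R) :
  strictly_increasing_on_players N d -> weak_improving_move d C s s' ->
  (forall i, i \in C -> load s' (s' i) <= load s (s i)) /\
  (exists2 i, i \in C & load s' (s' i) < load s (s i)).
Proof.
move=> incr_d [_ le_u [i iC lt_u]].
have mono_d : {in [pred n | 0 < n <= #|N|] &, {mono d : m n / m <= n}}.
  by apply: leq_mono_in => m n /andP[m_gt0 _] /andP[_ nN] mn; exact: incr_d.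
have loadD (s1 : state N R) k : load s1 (s1 k) \in [pred n | 0 < n <= #|N|].
  by apply/andP; split; [exact: load_gt0 | exact: load_le_card].
split=> [k kC | ]; last exists i => //.
  by rewrite -mono_d //; have := le_u k kC; rewrite /utility lerN2 lez_nat.
by rewrite ltnNge -mono_d // -ltnNge; move: lt_u; rewrite /utility ltrN2 ltz_nat.
Qed.

Lemma partition_move_potential_lt (d : nat -> nat) (s s' : state N R) :
  strictly_increasing_on_players N d -> partition_move d P s s' ->
  potential s' < potential s.
Proof.
move=> incr_d [C CP mv].
have [le_load [i iC lt_load]] := weak_improving_move_load_le incr_d mv.
case: mv => sCs _ _.
rewrite !(potential_split _ CP) (potential_outside_eq sCs) ltn_add2r ltn_pmul2l //.
rewrite (bigD1 i iC) [X in _ < X](bigD1 i iC) /= -addSn leq_add //.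
by apply: leq_sum => k /andP[kC _]; exact: le_load.
Qed.

End Potential.

Theorem proposition1 (N R : finType) (d : nat -> nat) (P : {set {set N}}) :
  partition P [set: N] ->
  strictly_increasing_on_players N d ->
  (~ exists f : nat -> state N R, forall n, partition_move d P (f n) (f n.+1)) /\
  (forall s : state N R, (forall s', ~ partition_move d P s s') ->
     partition_equilibrium d P s).
Proof.
move=> partP incr_d; split.
  case=> f moves; apply: (@no_infinite_descent _ (potential P) f) => n.
  exact: (partition_move_potential_lt partP incr_d (moves n)).
by move=> s stuck C CP s' mv; apply: (stuck s'); exists C.
Qed.
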